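(* Let $\mathcal{A}$ be a ring with identity $1$ and let $a,b,d\in\mathcal{A}$. The following statements are equivalent: (i) $b$ is the Mary (natural) inverse of $a$ along $d$, i.e. $bab=b$, $b\mathcal{A}=d\mathcal{A}$ and $\mathcal{A}b=\mathcal{A}d$; (ii) $b$ is an outer inverse of $a$ (i.e. $bab=b$), $d$ is inner regular, and there exists a reflexive inverse $t\in\mathcal{A}$ of $d$ (i.e. $dtd=d$ and $tdt=t$) such that $ba=dt$ and $ab=td$.
   Context: For $x,y$ in a ring $\mathcal{A}$ with identity, $x\mathcal{A}\subset y\mathcal{A}$ means there exists $z\in\mathcal{A}$ with $x=yz$, and $x\mathcal{A}=y\mathcal{A}$ means both inclusions hold; similarly $\mathcal{A}x\subset\mathcal{A}y$ means $x=zy$ for some $z\in\mathcal{A}$. An element $d$ is inner regular if there is $t\in\mathcal{A}$ with $dtd=d$. An element $b$ satisfying $bab=b$, $b\mathcal{A}=d\mathcal{A}$, $\mathcal{A}b=\mathcal{A}d$ is called the Mary (natural) inverse of $a$ along $d$; it is unique when it exists. *)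

From mathcomp Require Import all_boot all_algebra.
Set Implicit Arguments. Unset Strict Implicit. Unset Printing Implicit Defensive.
Import GRing.Theory.
Local Open Scope ring_scope.

(* Principal right/left ideal inclusions in a (possibly noncommutative) ring. *)
Definition rsub (R : pzRingType) (x y : R) : Prop := exists z : R, x = y * z.
Definition lsub (R : pzRingType) (x y : R) : Prop := exists z : R, x = z * y.

Definition inner_regular (R : pzRingType) (d : R) : Prop := exists t : R, d * t * d = d.

Definition mary_inverse (R : pzRingType) (a d b : R) : Prop :=
  b * a * b = b /\ (rsub b d /\ rsub d b) /\ (lsub b d /\ lsub d b).

From mathcomp Require Import all_boot all_algebra.
Set Implicit Arguments. Unset Strict Implicit.
Import GRing.Theory.
Local Open Scope ring_scope.

(* From b = d x, b = u d and b a b = b one gets the inner inverse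
   s = x a + a u - x a d a u of d with d s = b a and s d = a b; the usual
   trick s d s then makes it reflexive without changing d s and s d.
   Conversely, with b a = d t and a b = t d, each of b and d is a left and a
   right multiple of the other through the idempotents b a and a b. *)

Section MaryInverse.

Variable R : pzRingType.
Implicit Types a b d s t : R.

Lemma reflexive_of_inner d s : d * s * d = d ->
  [/\ d * (s * d * s) * d = d, s * d * s * d * (s * d * s) = s * d * s,
      d * (s * d * s) = d * s & s * d * s * d = s * d].
Proof.
move=> dsd.
have ds : d * (s * d * s) = d * s by rewrite !mulrA dsd.
have sdsd : s * d * (s * d) = s * d by rewrite -mulrA (mulrA d s d) dsd.
have sd : s * d * s * d = s * d by rewrite -mulrA sdsd.
split=> //; first by rewrite ds dsd.
by rewrite sd mulrA sdsd.
Qed.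

Lemma outer_rsub_fix a b d : b * a * b = b -> rsub d b -> b * a * d = d.
Proof. by move=> bab [y ->]; rewrite mulrA bab. Qed.

Lemma outer_lsub_fix a b d : b * a * b = b -> lsub d b -> d * a * b = d.
Proof. by move=> bab [v ->]; rewrite -!mulrA (mulrA b) bab. Qed.

Lemma mary_inner_inverse a b d : mary_inverse a d b ->
  exists s, d * s = b * a /\ s * d = a * b.
Proof.
move=> [bab [[[x bdx] rdb] [[u bud] ldb]]].
have bad := outer_rsub_fix bab rdb.
have dab := outer_lsub_fix bab ldb.
exists (x * a + a * u - x * a * d * a * u); split.
- rewrite mulrBr mulrDr !mulrA -bdx -(mulrA b a d) -(mulrA (b * (a * d))) !mulrA.
  by rewrite bad addrK.
- rewrite mulrBl mulrDl -!mulrA -bud (mulrA d a b) dab.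
  by rewrite addrC addKr.
Qed.

Lemma mary_reflexive_inverse a b d : mary_inverse a d b ->
  exists t, [/\ d * t * d = d, t * d * t = t, b * a = d * t & a * b = t * d].
Proof.
move=> mary; have [s [ds sd]] := mary_inner_inverse mary.
have [bab [[_ rdb] _]] := mary.
have dsd : d * s * d = d by rewrite ds (outer_rsub_fix bab rdb).
have [dtd tdt dt td] := reflexive_of_inner dsd.
by exists (s * d * s); split; rewrite // ?dt ?td ?ds ?sd.
Qed.

Lemma mary_of_reflexive a b d t : b * a * b = b -> d * t * d = d ->
  b * a = d * t -> a * b = t * d -> mary_inverse a d b.
Proof.
move=> bab dtd ba ab; split=> //; split; split.
- by exists (t * b); rewrite mulrA -ba bab.
- by exists (a * d); rewrite mulrA ba dtd.
- by exists (b * t); rewrite -mulrA -ab mulrA bab.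
- by exists (d * a); rewrite -mulrA ab mulrA dtd.
Qed.

End MaryInverse.

Theorem theorem2p3 (R : pzRingType) (a b d : R) :
  mary_inverse a d b <->
  (b * a * b = b /\ inner_regular d /\
   exists t : R, d * t * d = d /\ t * d * t = t /\ b * a = d * t /\ a * b = t * d).
Proof.
split.
- move=> mary; have [t [dtd tdt ba ab]] := mary_reflexive_inverse mary.
  split; first by case: mary.
  by split; [exists t | exists t].
- move=> [bab [_ [t [dtd [_ [ba ab]]]]]].
  exact: mary_of_reflexive bab dtd ba ab.
Qed.
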